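(* Let $\mathbf a=(a_1,\dots,a_m)$ be an irreducible sequence, and for a nonnegative integer $x$ let $\mathbf m'(\mathbf a,x)$ be the $m\times m$ matrix whose $(i,j)$-entry is $$\frac{(q^{2x+2i};q^2)_{a_j+1-2i}}{(q^{2x+2i};q)_{a_j+1-2i}\,(q;q)_{a_j+1-2i}}$$ if $a_j+1-2i\ge 0$, and $0$ otherwise. Then there exists a lower triangular $m\times m$ matrix $\mathbf f(\mathbf a)$ with entries in the field $\mathbb C(q)$ of rational functions, all diagonal entries equal to $1$, and whose entries do not depend on $x$, such that for every nonnegative integer $x$ the product $\mathbf m'(\mathbf a,x)\cdot \mathbf f(\mathbf a)$ is upper triangular and its diagonal entries are elements of $\mathbb C(q)$ that do not depend on $x$.
   Context: $q$ is an indeterminate. For integers $n\ge 0$, $(a;q)_n=\prod_{j=0}^{n-1}(1-aq^j)$ (so $(a;q)_0=1$). A finite sequence of integers $\mathbf a=(a_1,\dots,a_m)$ is called admissible if it is strictly increasing and $2i-1\le a_i\le 2m$ for all $1\le i\le m$. An admissible sequence is called irreducible if moreover $2i+1\le a_i\le 2m$ for all $1\le i<m$ and $a_m=2m$. *)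

(* C = (complex R) for R : realType (the real numbers),
   C(q) = {fraction {poly C}}, q = 'X viewed in the fraction field. *)
From HB Require Import structures.
From mathcomp Require Import all_boot all_order all_algebra.
From mathcomp Require Import complex.
From mathcomp Require Import reals.
Set Implicit Arguments. Unset Strict Implicit. Unset Printing Implicit Defensive.
Import Order.TTheory GRing.Theory Num.Theory.
Local Open Scope ring_scope.

Definition Cq (R : realType) : fieldType := {fraction {poly (complex R)}}.

Definition qq (R : realType) : Cq R := FracField.tofrac ('X : {poly (complex R)}).

Definition qpoch (F : fieldType) (a b : F) (n : nat) : F :=
  \prod_(j < n) (1 - a * b ^+ j).

(* Sequences a = (a_1,...,a_m) are lists of nats; a_k = nth 0 a (k-1),
   m = size a.  Below, index k is 0-based, i.e. a_{k+1} = nth 0 a k. *)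
Definition admissible (a : seq nat) : Prop :=
  sorted ltn a /\
  (forall k, (k < size a)%N -> (2 * k + 1 <= nth 0 a k <= 2 * size a)%N).

Definition irreducible_seq (a : seq nat) : Prop :=
  admissible a /\
  (forall k, (k.+1 < size a)%N -> (2 * k + 3 <= nth 0 a k <= 2 * size a)%N) /\
  nth 0 a (size a).-1 = (2 * size a)%N.

(* The matrix m'(a,x).  With 0-based i (paper's i = i+1) and j,
   n := a_j + 1 - 2(i+1) = a_j - (2i+1); entry is
   (q^{2x+2(i+1)}; q^2)_n / ((q^{2x+2(i+1)}; q)_n (q;q)_n)  if n >= 0, else 0. *)
Definition mprime (R : realType) (a : seq nat) (x : nat)
  : 'M[Cq R]_(size a) :=
  \matrix_(i < size a, j < size a)
    let aj := nth 0 a j in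
    if (2 * i + 1 <= aj)%N then
      let n := (aj - (2 * i + 1))%N in
      let b := qq R ^+ (2 * x + 2 * i.+1) in
      qpoch b (qq R ^+ 2) n / (qpoch b (qq R) n * qpoch (qq R) (qq R) n)
    else 0.

(* Write g_z(n) = (z;q^2)_n / ((z;q)_n (q;q)_n), so that the (i, j) entry of
   m'(a, x) is g_z(a_j - 2i - 1) with z = q^(2x+2i+2) (0-based indices).
   1. g_z(n) = sum_s c_s(z) / (q;q)_(n-2s) for explicit coefficients c_s(z):
      both sides satisfy the same three-term recurrence in n (gterm_expand).
   2. Hence m'(a, x) = C(x) N with C(x) upper unitriangular and
      N = (1 / (q;q)_(a_p - 2k - 1))_(k,p) independent of x (mprime_factor).
   3. The trailing principal minors of N are nonzero: clearing denominators
      gives a polynomial determinant whose diagonal term is the unique term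
      of top degree, by the strict rearrangement inequality
      (det_rpoch_mx_neq0).
   4. A matrix with nonzero trailing principal minors is made upper
      triangular by right multiplication with a lower unitriangular matrix f
      (unitri_column_reduction).
   Then m'(a, x) f = C(x) (N f) is upper triangular with the diagonal of N f. *)

From HB Require Import structures.
From mathcomp Require Import all_boot all_order all_algebra all_fingroup.
From mathcomp Require Import complex reals.
From mathcomp Require Import ring zify.
Set Implicit Arguments. Unset Strict Implicit. Unset Printing Implicit Defensive.
Import Order.TTheory GRing.Theory Num.Theory.

Definition weighted_sum n (b al : nat -> nat) (s : 'S_n) : nat :=
  \sum_(i < n) b i * al (s i).

Lemma perm_increasing_id n (s : 'S_n) :
  (forall k k1 : 'I_n, val k1 = (val k).+1 -> s k < s k1) -> s = 1%g.
Proof.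
move=> s_incr.
have ge_id i (lt_in : i < n) : i <= s (Ordinal lt_in).
  elim: i lt_in => [|i IH] lt_in //.
  have lt_in' : i < n by lia.
  have := IH lt_in'; have := s_incr (Ordinal lt_in') (Ordinal lt_in) erefl; lia.
have le_id j i (lt_in : i < n) : n - i = j.+1 -> s (Ordinal lt_in) <= i.
  elim: j i lt_in => [|j IH] i lt_in ni.
    by have := ltn_ord (s (Ordinal lt_in)); lia.
  have lt_in' : i.+1 < n by lia.
  have := IH i.+1 lt_in' ltac:(lia).
  have := s_incr (Ordinal lt_in) (Ordinal lt_in') erefl; lia.
apply/permP => -[i lt_in]; rewrite perm1; apply/val_inj => /=.
have := ge_id i lt_in; have := le_id (n - i).-1 i lt_in ltac:(lia); lia.
Qed.

Lemma perm_descent n (s : 'S_n) : s != 1%g ->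
  exists k k1 : 'I_n, val k1 = (val k).+1 /\ s k1 < s k.
Proof.
move=> s_id.
case: (boolP [exists k : 'I_n, exists k1 : 'I_n, (val k1 == (val k).+1) && (s k1 < s k)]).
  by move=> /existsP[k /existsP[k1 /andP[/eqP kk1 desc]]]; exists k, k1.
rewrite negb_exists => /forallP no_descent; exfalso; move/eqP: s_id; apply.
apply: perm_increasing_id => k k1 kk1.
case: (ltngtP (s k) (s k1)) => // [s_desc | /val_inj/perm_inj k_k1].
- by move: (no_descent k); rewrite negb_exists => /forallP/(_ k1); rewrite kk1 eqxx s_desc.
- by move: kk1; rewrite k_k1; lia.
Qed.

Lemma weighted_sum_tperm n (b al : nat -> nat) (s : 'S_n) (k k1 : 'I_n) :
  k != k1 ->
  weighted_sum b al (tperm k k1 * s)%g + b k * al (s k) + b k1 * al (s k1)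
  = weighted_sum b al s + b k * al (s k1) + b k1 * al (s k).
Proof.
move=> kk1; rewrite /weighted_sum (bigD1 k) // (bigD1 k1) 1?eq_sym //=.
rewrite [in RHS](bigD1 k) // [in RHS](bigD1 k1) 1?eq_sym //=.
rewrite !permM tpermL tpermR.
rewrite (eq_bigr (fun i : 'I_n => b i * al (s i))); first by lia.
by move=> i /andP[ik ik1]; rewrite permM tpermD // eq_sym.
Qed.

Lemma weighted_sum_tperm_lt n (b al : nat -> nat) (s : 'S_n) (k k1 : 'I_n) :
  k != k1 -> b k < b k1 -> al (s k1) < al (s k) ->
  weighted_sum b al s < weighted_sum b al (tperm k k1 * s)%g.
Proof. by move=> kk1 bk alk; have := weighted_sum_tperm b al s kk1; nia. Qed.

Lemma rearrangement_strict n (b al : nat -> nat) :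
  (forall i j, i < j < n -> b i < b j) -> (forall i j, i < j < n -> al i < al j) ->
  forall s : 'S_n, s != 1%g -> weighted_sum b al s < weighted_sum b al (1%g : 'S_n).
Proof.
move=> b_incr al_incr.
(* Termination measure: the weight for b = al = id, bounded by n^3. *)
pose phi (s : 'S_n) := weighted_sum id id s.
have phi_bound s : phi s <= n * (n * n).
  apply: leq_trans (_ : \sum_(i < n) n * n <= _); last by rewrite sum_nat_const card_ord.
  by apply: leq_sum => i _; apply: leq_mul; apply: ltnW.
suff: forall d s, n * (n * n) - phi s < d -> s != 1%g ->
    weighted_sum b al s < weighted_sum b al (1%g : 'S_n) by move=> H s; apply: H (ltnSn _).
elim=> [|d IH] s lt_d s_id; first by rewrite ltn0 in lt_d.
have [k [k1 [kk1 desc]]] := perm_descent s_id.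
have k_neq : k != k1 by apply/eqP => E; move: kk1; rewrite E; lia.
have k_lt : k < k1 < n by rewrite ltn_ord kk1 andbT.
have lt_swap : weighted_sum b al s < weighted_sum b al (tperm k k1 * s)%g.
  by apply: weighted_sum_tperm_lt; [|apply: b_incr|apply: al_incr; rewrite desc ltn_ord].
have phi_swap : phi s < phi (tperm k k1 * s)%g by apply: weighted_sum_tperm_lt => //=; lia.
case: (eqVneq (tperm k k1 * s)%g 1%g) => [<- // | swap_id].
apply: ltn_trans lt_swap (IH _ _ swap_id).
by have := phi_bound (tperm k k1 * s)%g; lia.
Qed.

Local Open Scope ring_scope.

Section Pochhammer.
Variable F : fieldType.
Implicit Types a b z : F.

Lemma qpochS a b n : qpoch a b n.+1 = qpoch a b n * (1 - a * b ^+ n).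
Proof. by rewrite /qpoch big_ord_recr. Qed.

Lemma qpochSl a b n : qpoch a b n.+1 = (1 - a) * qpoch (a * b) b n.
Proof.
rewrite /qpoch big_ord_recl expr0 mulr1; congr (_ * _).
by apply: eq_bigr => i _; rewrite lift0 exprS mulrA.
Qed.

Lemma qpochD a b m n :
  qpoch a b (m + n) = qpoch a b m * \prod_(j < n) (1 - a * b ^+ (m + j)).
Proof.
elim: n => [|n IH]; first by rewrite addn0 big_ord0 mulr1.
by rewrite addnS qpochS IH big_ord_recr /= mulrA.
Qed.

Lemma qpoch_shift a b n :
  (1 - a * b) * qpoch (a * b ^+ 2) b n = qpoch (a * b) b n * (1 - a * b ^+ n.+1).
Proof. by rewrite [in RHS]exprS mulrA -qpochS qpochSl -mulrA -expr2. Qed.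

End Pochhammer.

Section QCalculus.
Variables (F : fieldType) (q : F).
Hypothesis q_free : forall k, (0 < k)%N -> 1 - q ^+ k != 0.

Lemma qpoch_qpow_neq0 e n : (0 < e)%N -> qpoch (q ^+ e) q n != 0.
Proof.
by move=> e_gt0; apply/prodf_neq0 => i _; rewrite -exprD q_free // addn_gt0 e_gt0.
Qed.

Lemma qpoch_qq_neq0 n : qpoch q q n != 0.
Proof. by have := @qpoch_qpow_neq0 1 n; rewrite expr1; apply. Qed.

Definition rpoch (al b : nat) : F :=
  if (b <= al)%N then (qpoch q q (al - b))^-1 else 0.

Lemma rpoch_shift n b k : rpoch (n + k) (b + k) = rpoch n b.
Proof. by rewrite /rpoch leq_add2r subnDr. Qed.

Lemma rpoch_rec n b : (0 < n)%N ->
  (1 - q ^+ n) * rpoch n b = rpoch n.-1 b + q ^+ (n - b) * (1 - q ^+ b) * rpoch n b.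
Proof.
move=> n_gt0; rewrite /rpoch.
case: (ltngtP b n) => [b_lt|b_gt|->]; last first.
- have -> : (n <= n.-1)%N = false by lia.
  by rewrite subnn /qpoch big_ord0 invr1 expr0 mul1r !mulr1 add0r.
- have -> : (b <= n.-1)%N = false by lia.
  by rewrite !mulr0 addr0.
have -> : (b <= n.-1)%N by lia.
have -> : (n - b = (n.-1 - b).+1)%N by lia.
have -> : q ^+ n = q ^+ (n.-1 - b).+1 * q ^+ b by rewrite -exprD; congr (_ ^+ _); lia.
have nz := q_free (ltn0Sn (n.-1 - b)).
rewrite qpochS -exprS invfM.
have nzP := qpoch_qq_neq0 (n.-1 - b).
by field; rewrite nzP nz.
Qed.

Definition gterm (z : F) (n : nat) : F :=
  qpoch z (q ^+ 2) n / (qpoch z q n * qpoch q q n).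

Lemma gterm_rec e k : (0 < e)%N ->
  (1 - q ^+ k.+2) * gterm (q ^+ e) k.+2
  = gterm (q ^+ e) k.+1
    + q ^+ e * q ^+ k.+1 / (1 - q ^+ e * q) * gterm (q ^+ e * q ^+ 2) k.
Proof.
move=> e_gt0; rewrite /gterm; set z := q ^+ e; set Q := q ^+ k.+1.
set A := qpoch (z * q ^+ 2) (q ^+ 2) k; set B := qpoch (z * q ^+ 2) q k.
set D := qpoch (z * q) q k; set P := qpoch q q k.
have num2 : qpoch z (q ^+ 2) k.+2 = (1 - z) * A * (1 - z * Q ^+ 2).
  by rewrite qpochS qpochSl -!exprM mulnC.
have den2 : qpoch z q k.+2 = (1 - z) * (1 - z * q) * B.
  by rewrite qpochSl qpochSl mulrA -(mulrA z) -expr2.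
have num1 : qpoch z (q ^+ 2) k.+1 = (1 - z) * A by rewrite qpochSl.
have den1 : qpoch z q k.+1 = (1 - z) * D by rewrite qpochSl.
have P2 : qpoch q q k.+2 = P * (1 - Q) * (1 - q * Q) by rewrite !qpochS -exprS.
have P1 : qpoch q q k.+1 = P * (1 - Q) by rewrite qpochS -exprS.
have qk2 : q ^+ k.+2 = q * Q by rewrite exprS.
have nz_z : 1 - z != 0 by rewrite q_free.
have nz_zq : 1 - z * q != 0 by rewrite /z -exprSr q_free.
have nz_zQ : 1 - z * Q != 0 by rewrite /z /Q -exprD q_free // addn_gt0 e_gt0.
have nz_Q : 1 - Q != 0 by apply: q_free.
have nz_qQ : 1 - q * Q != 0 by rewrite -exprS q_free.
have nz_D : D != 0 by rewrite /D /z -exprSr qpoch_qpow_neq0.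
have nz_P : P != 0 by apply: qpoch_qq_neq0.
have BD : B = D * (1 - z * Q) / (1 - z * q).
  by rewrite -qpoch_shift mulrC mulKf.
rewrite num2 den2 num1 den1 P2 P1 BD qk2.
by field; rewrite nz_z nz_zq nz_zQ nz_Q nz_qQ nz_D nz_P.
Qed.

(* The coefficients c_s(z) of the expansion of gterm z n over the
   functions n |-> 1 / (q;q)_(n - 2s). *)
Fixpoint ccoef (s : nat) (z : F) : F :=
  if s is s'.+1 then
    z * q ^+ (2 * s' + 1) / ((1 - q ^+ (2 * s' + 2)) * (1 - z * q)) * ccoef s' (z * q ^+ 2)
  else 1.

Definition cexp (S : nat) (z : F) (n : nat) : F :=
  \sum_(s < S) ccoef s z * rpoch n (2 * s).

Lemma cexp_rec S z k : 1 - z * q != 0 ->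
  (1 - q ^+ k.+2) * cexp S.+1 z k.+2
  = cexp S.+1 z k.+1 + z * q ^+ k.+1 / (1 - z * q) * cexp S (z * q ^+ 2) k.
Proof.
move=> nz_zq; rewrite /cexp mulr_sumr.
under eq_bigr => s _ do rewrite mulrCA (rpoch_rec _ (ltn0Sn _)) mulrDr.
rewrite big_split /=; congr (_ + _).
rewrite big_ord_recl muln0 expr0 subrr mulr0 mul0r mulr0 add0r mulr_sumr.
apply: eq_bigr => i _ /=.
have -> : rpoch k.+2 (2 * i.+1) = rpoch k (2 * i).
  by rewrite -(rpoch_shift k (2 * i) 2) mulnSr !addn2.
case: (leqP (2 * i) k) => [le_ik | lt_ki]; last by rewrite /rpoch leqNgt lt_ki !mulr0.
have -> : q ^+ k.+1 = q ^+ (2 * i + 1) * q ^+ (k.+2 - 2 * i.+1).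
  by rewrite -exprD; congr (_ ^+ _); lia.
have -> : (2 * i.+1 = 2 * i + 2)%N by lia.
have nz_w : 1 - q ^+ (2 * i + 2) != 0 by rewrite q_free // addn2.
by field; rewrite nz_w nz_zq.
Qed.

Lemma cexp_le1 S z n : (n <= 1)%N -> cexp S.+1 z n = rpoch n 0.
Proof.
move=> n_le1; rewrite /cexp big_ord_recl muln0 /= mul1r big1 ?addr0 // => i _.
by rewrite /rpoch /bump /= ifF ?mulr0 //; lia.
Qed.

Lemma gterm_expand e S n : (0 < e)%N -> (n < 2 * S)%N ->
  gterm (q ^+ e) n = cexp S (q ^+ e) n.
Proof.
elim/ltn_ind: n e S => -[|[|k]] IH e [|S] e_gt0 nS //.
- by rewrite cexp_le1 // /gterm /rpoch /qpoch !big_ord0 mulr1 divr1 invr1.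
- rewrite cexp_le1 // /gterm /rpoch subn0 /qpoch !big_ord1 !expr0 !mulr1.
  by rewrite invfM mulrA mulfV ?mul1r // q_free.
apply: (mulfI (q_free (ltn0Sn k.+1))).
rewrite gterm_rec // cexp_rec; last by rewrite -exprSr q_free.
rewrite (IH k.+1 _ e S.+1) //; last by lia.
by rewrite -[q ^+ e * q ^+ 2]exprD (IH k _ (e + 2)%N S) //; lia.
Qed.

End QCalculus.

(* Determinants of matrices of Pochhammer ratios, over an integral domain. *)
Section PolynomialDeterminant.
Variable R : idomainType.
Implicit Types (al b : nat).

(* The polynomial (X;X)_al / (X;X)_(al - b) = prod_(j < b) (1 - X^(al-b+j+1)),
   set to 0 when b > al. *)
Definition poch_ratio al b : {poly R} :=
  if (b <= al)%N then \prod_(j < b) (1 - 'X^(al - b + j.+1)) else 0.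

Definition ratio_deg al b : nat := \sum_(j < b) (al - b + j.+1).

Lemma size_1subXn e : (0 < e)%N -> size (1 - 'X^e : {poly R}) = e.+1.
Proof. by move=> e_gt0; rewrite -opprB size_polyN -polyC1 size_XnsubC. Qed.

Lemma size_poch_ratio al b : (b <= al)%N -> size (poch_ratio al b) = (ratio_deg al b).+1.
Proof.
move=> le_ba; rewrite /poch_ratio le_ba size_prod => [|j _]; last first.
  by rewrite -size_poly_eq0 size_1subXn // addnS.
rewrite (eq_bigr (fun j : 'I_b => al - b + j.+1 + 1)%N) => [|j _]; last first.
  by rewrite size_1subXn ?addn1 // addnS.
by rewrite big_split /= sum_nat_const card_ord muln1 -addSn addnK.
Qed.

Lemma ratio_deg_eq al b : (b <= al)%N -> (ratio_deg al b + \sum_(j < b) j = b * al)%N.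
Proof.
elim: b => [|b IH] le_ba; first by rewrite /ratio_deg !big_ord0.
rewrite /ratio_deg big_ord_recl [X in (_ + X)%N]big_ord_recr /= mulSn.
have -> : \sum_(i < b) (al - b.+1 + (bump 0 i).+1)%N = ratio_deg al b.
  by apply: eq_bigr => i _; rewrite /bump /=; lia.
have -> : (\sum_(i < b) widen_ord (leqnSn b) i = \sum_(j < b) j)%N by apply: eq_bigr.
by have := IH (ltnW le_ba); lia.
Qed.

Section Matrix.
Variables (n : nat) (al b : nat -> nat).
Hypotheses (b_incr : forall i j, (i < j < n)%N -> (b i < b j)%N)
           (al_incr : forall i j, (i < j < n)%N -> (al i < al j)%N)
           (b_le_al : forall k, (k < n)%N -> (b k <= al k)%N).

Let A : 'M[{poly R}]_n := \matrix_(k < n, p < n) poch_ratio (al p) (b k).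
Let term (s : 'S_n) : {poly R} := (-1) ^+ s * \prod_i A i (s i).

Lemma size_term (s : 'S_n) : (forall i : 'I_n, b i <= al (s i))%N ->
  size (term s) = (\sum_(i < n) ratio_deg (al (s i)) (b i)).+1.
Proof.
move=> le_bs; rewrite size_Msign size_prod => [|i _]; last first.
  by rewrite mxE -size_poly_eq0 size_poch_ratio.
rewrite (eq_bigr (fun i => ratio_deg (al (s i)) (b i) + 1)%N) => [|i _]; last first.
  by rewrite mxE size_poch_ratio ?addn1.
by rewrite big_split /= sum_nat_const card_ord muln1; lia.
Qed.

Lemma diag_le : forall i : 'I_n, (b i <= al ((1%g : 'S_n) i))%N.
Proof. by move=> i; rewrite perm1 b_le_al. Qed.

Lemma total_deg_eq (s : 'S_n) : (forall i : 'I_n, b i <= al (s i))%N ->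
  (\sum_(i < n) ratio_deg (al (s i)) (b i) + \sum_(i < n) \sum_(j < b i) j
   = weighted_sum b al s)%N.
Proof.
by move=> le_bs; rewrite /weighted_sum -big_split; apply: eq_bigr => i _; apply: ratio_deg_eq.
Qed.

(* By the strict rearrangement inequality, the identity term has the
   largest degree. *)
Lemma size_term_lt (s : 'S_n) : s != 1%g -> (size (term s) < size (term 1%g))%N.
Proof.
move=> s_id; case: (boolP [forall i : 'I_n, b i <= al (s i)]%N) => [/forallP le_bs|].
  rewrite (size_term le_bs) (size_term diag_le).
  have := rearrangement_strict b_incr al_incr s_id.
  by rewrite -(total_deg_eq le_bs) -(total_deg_eq diag_le) ltn_add2r ltnS.
rewrite negb_forall => /existsP[i lt_i].
rewrite /term (bigD1 i) //= mxE /poch_ratio (negbTE lt_i) mul0r mulr0 size_poly0.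
by rewrite (size_term diag_le).
Qed.

(* The identity term dominates all others, so it cannot cancel. *)
Lemma det_poch_ratio_neq0 : \det A != 0.
Proof.
have -> : \det A = term 1%g + \sum_(s | s != 1%g) term s by rewrite /determinant (bigD1 1%g).
have lt_sum : (size (\sum_(s | s != 1%g) term s)%R < size (term 1%g))%N.
  apply: (big_ind (fun p : {poly R} => size p < size (term 1%g))%N).
  - by rewrite size_poly0 (size_term diag_le).
  - by move=> x y x_lt y_lt; apply: leq_ltn_trans (size_polyD x y) _; rewrite gtn_max x_lt y_lt.
  - exact: size_term_lt.
by rewrite -size_poly_eq0 size_polyDl // (size_term diag_le).
Qed.

End Matrix.
End PolynomialDeterminant.

Definition trailing_minor (F : fieldType) (n : nat) (M : nat -> nat -> F) (k : nat) : F :=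
  \det (\matrix_(i < k, j < k) M (n - k + i)%N (n - k + j)%N).

Lemma unitri_column_reduction (F : fieldType) n (M : nat -> nat -> F) :
  (forall k, (k <= n)%N -> trailing_minor n M k != 0) ->
  exists f : 'M[F]_n,
    [/\ (forall i j : 'I_n, (i < j)%N -> f i j = 0),
        (forall i : 'I_n, f i i = 1) &
        (forall i j : 'I_n, (j < i)%N -> ((\matrix_(i < n, j < n) M i j) *m f) i j = 0)].
Proof.
elim: n M => [|n IH] M minors_neq0; first by exists 0; split => -[].
pose M' i j := M i.+1 j.+1.
have minors'_neq0 k : (k <= n)%N -> trailing_minor n M' k != 0.
  by move=> le_kn; have := minors_neq0 k (leqW le_kn); rewrite /trailing_minor subSn.
have [f' [f'_up f'_diag f'_red]] := IH M' minors'_neq0.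
(* The lower right block D is invertible; solve D y = - (first column below row 0). *)
set D := \matrix_(i < n, j < n) M' i j.
have D_unit : D \in unitmx.
  by rewrite unitmxE unitfE; have := minors_neq0 n (leqnSn n); rewrite /trailing_minor subSnn.
pose c : 'cV[F]_n := \col_(k < n) M k.+1 0.
pose y := - (invmx D *m c).
have Dy : D *m y = - c by rewrite mulmxN mulKVmx.
pose f : 'M[F]_n.+1 := \matrix_(i, j)
  match unlift ord0 j, unlift ord0 i with
  | None, None => 1
  | None, Some i' => y i' 0
  | Some j', None => 0
  | Some j', Some i' => f' i' j'
  end.
have fLL i' j' : f (lift ord0 i') (lift ord0 j') = f' i' j' by rewrite /f mxE !liftK.
have fL0 i' : f (lift ord0 i') ord0 = y i' 0 by rewrite /f mxE liftK unlift_none.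
have f0L j' : f ord0 (lift ord0 j') = 0 by rewrite /f mxE liftK unlift_none.
have f00 : f ord0 ord0 = 1 by rewrite /f mxE unlift_none.
have ML i' k' : (\matrix_(i < n.+1, j < n.+1) M i j) (lift ord0 i') (lift ord0 k') = D i' k'.
  by rewrite !mxE !lift0.
exists f; split.
- move=> i j; case: (unliftP ord0 j) => [j'|] ->; last by rewrite ltn0.
  case: (unliftP ord0 i) => [i'|] ->; last by rewrite f0L.
  by rewrite fLL !lift0 ltnS => /f'_up.
- by move=> i; case: (unliftP ord0 i) => [i'|] ->; [rewrite fLL f'_diag | exact: f00].
move=> i j; case: (unliftP ord0 i) => [i'|] -> //; rewrite mxE big_ord_recl.
case: (unliftP ord0 j) => [j'|] -> lt_ji.
- rewrite f0L mulr0 add0r; transitivity ((D *m f') i' j'); last first.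
    by apply: f'_red; move: lt_ji; rewrite !lift0.
  by rewrite mxE; apply: eq_bigr => k _; rewrite ML fLL.
- have Dy_i := congr1 (fun v : 'cV[F]_n => v i' 0) Dy; rewrite /= !mxE in Dy_i.
  rewrite f00 mulr1 (eq_bigr (fun k => D i' k * y k 0)) => [|k _]; last by rewrite ML fL0.
  by rewrite Dy_i mxE lift0 subrr.
Qed.

Lemma unitri_mul_upper (F : fieldType) n (T U : 'M[F]_n) :
  (forall i j : 'I_n, (j < i)%N -> T i j = 0) -> (forall i, T i i = 1) ->
  (forall i j : 'I_n, (j < i)%N -> U i j = 0) ->
  (forall i j : 'I_n, (j < i)%N -> (T *m U) i j = 0) /\ (forall i, (T *m U) i i = U i i).
Proof.
move=> T_up T_diag U_up; split=> [i j lt_ji | i]; rewrite mxE.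
  rewrite big1 // => k _; case: (ltnP k i) => [lt_ki | le_ik]; first by rewrite T_up ?mul0r.
  by rewrite U_up ?mulr0 //; apply: leq_trans lt_ji le_ik.
rewrite (bigD1 i) //= T_diag mul1r big1 ?addr0 // => k k_neq.
case: (ltngtP k i) => [lt_ki | lt_ik | /val_inj eq_ki].
- by rewrite T_up ?mul0r.
- by rewrite U_up ?mulr0.
- by rewrite eq_ki eqxx in k_neq.
Qed.

Definition rpoch_mx (F : fieldType) (q : F) n (al b : nat -> nat) : 'M[F]_n :=
  \matrix_(k < n, p < n) rpoch q (al p) (b k).

Lemma qq_free (R : realType) k : (0 < k)%N -> 1 - qq R ^+ k != 0.
Proof.
move=> k_gt0; rewrite /qq -rmorphXn -(rmorph1 (@FracField.tofrac _)) -rmorphB tofrac_eq0.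
by rewrite -size_poly_eq0 size_1subXn.
Qed.

Lemma poch_ratio_tofrac (R : realType) (al b : nat) :
  FracField.tofrac (poch_ratio (complex R) al b) = rpoch (qq R) al b * qpoch (qq R) (qq R) al.
Proof.
rewrite /poch_ratio /rpoch; case: leqP => [le_ba|_]; last by rewrite rmorph0 mul0r.
have -> : qpoch (qq R) (qq R) al = qpoch (qq R) (qq R) (al - b + b) by rewrite subnK.
rewrite qpochD mulKf ?qpoch_qq_neq0 //; last exact: qq_free.
rewrite rmorph_prod; apply: eq_bigr => j _.
by rewrite rmorphB rmorph1 rmorphXn -exprS addnS.
Qed.

Lemma det_rpoch_mx_neq0 (R : realType) n (al b : nat -> nat) :
  (forall i j, (i < j < n)%N -> (b i < b j)%N) ->
  (forall i j, (i < j < n)%N -> (al i < al j)%N) ->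
  (forall k, (k < n)%N -> (b k <= al k)%N) -> \det (rpoch_mx (qq R) n al b) != 0.
Proof.
move=> b_incr al_incr b_le_al; apply/negP => /eqP det0.
have := det_poch_ratio_neq0 (complex R) b_incr al_incr b_le_al.
rewrite -tofrac_eq0 -det_map_mx.
have -> : map_mx (@FracField.tofrac _) (\matrix_(k < n, p < n) poch_ratio (complex R) (al p) (b k))
    = rpoch_mx (qq R) n al b *m diag_mx (\row_(p < n) qpoch (qq R) (qq R) (al p)).
  by apply/matrixP => k p; rewrite mul_mx_diag !mxE poch_ratio_tofrac.
by rewrite det_mulmx det0 mul0r eqxx.
Qed.

Definition ccoef_mx (F : fieldType) (q : F) (m x : nat) : 'M[F]_m :=
  \matrix_(i < m, k < m) if (i <= k)%N then ccoef q (k - i) (q ^+ (2 * x + 2 * i.+1)) else 0.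

Lemma sum_shift (F : fieldType) m i (G : nat -> F) : (i <= m)%N ->
  \sum_(k < m) (if (i <= k)%N then G (k - i)%N else 0) = \sum_(s < m - i) G s.
Proof.
move=> le_im; rewrite -(big_mkord xpredT (fun k => if (i <= k)%N then G (k - i)%N else 0)).
rewrite (big_cat_nat (leq0n i) le_im) /= big_nat_cond big1 ?add0r; last first.
  by move=> k /andP[/andP[_ lt_ki] _]; rewrite leqNgt lt_ki.
rewrite -{1}(add0n i) big_addn -(big_mkord xpredT G).
by apply: eq_big_nat => s _; rewrite leq_addl addnK.
Qed.

(* The expansion gterm_expand, entrywise, factors m'(a, x) as an upper
   unitriangular matrix depending on x times a matrix independent of x. *)
Lemma mprime_factor (R : realType) (a : seq nat) x :
  (forall k, (k < size a)%N -> (nth 0 a k <= 2 * size a)%N) ->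
  mprime R a x
  = ccoef_mx (qq R) (size a) x *m rpoch_mx (qq R) (size a) (nth 0%N a) (fun k => 2 * k + 1)%N.
Proof.
move=> a_le; apply/matrixP => i j; rewrite !mxE.
pose G s := ccoef (qq R) s (qq R ^+ (2 * x + 2 * i.+1)) * rpoch (qq R) (nth 0%N a j) (2 * (i + s) + 1).
rewrite (eq_bigr (fun k : 'I_(size a) => if (i <= k)%N then G (k - i)%N else 0)) => [|k _]; last first.
  by rewrite !mxE; case: ifP => [le_ik|_]; [rewrite /G subnKC | rewrite mul0r].
rewrite sum_shift 1?ltnW //.
rewrite (_ : (a`_j)%R = nth 0%N a j) //= -/(gterm (qq R) _ _).
have := a_le j (ltn_ord j); case: ifP => [le_ij le_a | lt_ji _]; last first.
  by rewrite big1 // => s _; rewrite /G /rpoch; case: ifP => [?|_]; [lia | rewrite mulr0].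
rewrite (gterm_expand (@qq_free R) (S := (size a - i)%N)); [|lia|lia].
apply: eq_bigr => s _; rewrite /G; congr (_ * _).
by rewrite -(rpoch_shift _ _ _ (2 * i + 1)); congr rpoch; lia.
Qed.

Theorem mainTheorem2 (R : realType) (a : seq nat) :
  irreducible_seq a ->
  exists f : 'M[Cq R]_(size a),
    (forall i j : 'I_(size a), (i < j)%N -> f i j = 0) /\
    (forall i : 'I_(size a), f i i = 1) /\
    exists d : 'I_(size a) -> Cq R,
      forall x : nat,
        (forall i j : 'I_(size a), (j < i)%N -> (@mprime R a x *m f) i j = 0) /\
        (forall i : 'I_(size a), (@mprime R a x *m f) i i = d i).
Proof.
move=> [[a_sorted a_bounds] _]; set m := size a.
have a_incr i j : (i < j < m)%N -> (nth 0 a i < nth 0 a j)%N.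
  by case/andP=> lt_ij lt_jm; apply: (sorted_ltn_nth ltn_trans 0 a_sorted); rewrite ?inE /=; lia.
have odd_le_a k : (k < m)%N -> (2 * k + 1 <= nth 0 a k)%N by move/a_bounds/andP=> [].
have a_le k : (k < m)%N -> (nth 0 a k <= 2 * m)%N by move/a_bounds/andP=> [].
pose N := rpoch_mx (qq R) m (nth 0%N a) (fun k => 2 * k + 1)%N.
have [f [f_low f_diag f_red]] :
    exists f : 'M[Cq R]_m, [/\ (forall i j : 'I_m, (i < j)%N -> f i j = 0),
      (forall i : 'I_m, f i i = 1) & (forall i j : 'I_m, (j < i)%N -> (N *m f) i j = 0)].
  apply: (unitri_column_reduction (M := fun i j => rpoch (qq R) (nth 0%N a j) (2 * i + 1)%N)).
  move=> k le_km; apply: (@det_rpoch_mx_neq0 R k (fun p => nth 0%N a (m - k + p))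
                                            (fun i => 2 * (m - k + i) + 1)%N).
  - by move=> i j ?; lia.
  - by move=> i j ?; apply: a_incr; lia.
  - by move=> i ?; apply: odd_le_a; lia.
exists f; split=> //; split=> //; exists (fun i => (N *m f) i i) => x.
rewrite mprime_factor // -mulmxA; apply: unitri_mul_upper => // [i j lt_ji | i].
- by rewrite mxE leqNgt lt_ji.
- by rewrite mxE leqnn subnn.
Qed.
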